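(* Let $F \in S$ be a homogeneous form of degree $d$, let $\alpha \in T_1$ be a linear form, and let $I \subseteq F^\perp$ be a saturated homogeneous ideal of $T$ defining a zero-dimensional subscheme $\mathbb{P}V(I)\subset \mathbb{P}^{n-1}$ (not necessarily reduced). Suppose $\mathbb{P}V(I)$ has no point of support on the hyperplane $\mathbb{P}V(\alpha)$ (equivalently, $I = I:\alpha$). Then $\deg I \geq \mathrm{al}(F) - \mathrm{al}(\alpha \circ F)$.
   Context: $S=\mathbb{C}[x_1,\dots,x_n]$ and $T=\mathbb{C}[\alpha_1,\dots,\alpha_n]$, where $T$ acts on $S$ by letting $\alpha_i$ act as $\partial/\partial x_i$ (the apolarity action, denoted $\Theta\circ F$). $T_1$ denotes the linear forms of $T$. For $F\in S$, $F^\perp=\{\Theta\in T : \Theta\circ F=0\}$ is the apolar ideal. $\mathrm{Diff}(F)=\{\Theta\circ F:\Theta\in T\}\subset S$ (all partial derivatives of all orders, including $F$ itself), and the apolar length is $\mathrm{al}(F)=\dim_{\mathbb{C}}\mathrm{Diff}(F)=\dim_{\mathbb{C}} T/F^\perp$. $\mathbb{P}V(I)$ is the projective subscheme of $\mathbb{P}S_1=\mathbb{P}^{n-1}$ defined by $I$, and $\deg I$ is its length. *)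

From HB Require Import structures.
From mathcomp Require Import all_boot all_order all_algebra.
From mathcomp Require Import mpoly.
Set Implicit Arguments. Unset Strict Implicit. Unset Printing Implicit Defensive.
Import Order.TTheory GRing.Theory.
Local Open Scope ring_scope.

Section Apolarity.
Variables (K : fieldType) (n : nat).
Notation P := {mpoly K[n]}.

(* Apolarity action Theta o F: alpha_i acts as d/dx_i, i.e. the monomial
   alpha^m acts as the iterated partial derivative mderivm m. *)
Definition apolar (Theta F : P) : P :=
  \sum_(m <- msupp Theta) Theta@_m *: mderivm m F.

Definition perp (F : P) : P -> Prop := fun Theta => apolar Theta F = 0.

Definition Diff (F : P) : P -> Prop := fun G => exists Theta, G = apolar Theta F.

Definition homog_piece (t : nat) : P -> Prop := fun p => p \is t.-homog.

Definition hcomp (t : nat) (p : P) : P :=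
  \sum_(m <- msupp p | mdeg m == t) p@_m *: 'X_[m].

Definition free_mod (W : P -> Prop) (s : seq P) : Prop :=
  forall c : 'I_(size s) -> K,
    W (\sum_(i < size s) c i *: s`_i) -> forall i, c i = 0.

(* dim_mod V W k : the K-vector space V/(V cap W) has dimension k, i.e.
   k is the maximal size of a family of elements of V linearly independent
   modulo W.  With W = {0} this is dim V. *)
Definition dim_mod (V W : P -> Prop) (k : nat) : Prop :=
  (exists s : seq P, size s = k /\ (forall x, x \in s -> V x) /\ free_mod W s)
  /\ (forall s : seq P, (forall x, x \in s -> V x) -> free_mod W s -> (size s <= k)%N).

Definition zero_sp : P -> Prop := fun p => p = 0.

Definition apolar_length (F : P) (k : nat) : Prop := dim_mod (Diff F) zero_sp k.

Definition is_ideal (I : P -> Prop) : Prop :=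
  [/\ I 0, (forall p q, I p -> I q -> I (p + q)) & (forall p q, I p -> I (q * p))].

Definition is_homogeneous_ideal (I : P -> Prop) : Prop :=
  is_ideal I /\ forall p t, I p -> I (hcomp t p).

(* saturated w.r.t. the irrelevant ideal m = (alpha_1,...,alpha_n):
   I : m^oo = I; m^k is generated by the monomials of degree k *)
Definition is_saturated (I : P -> Prop) : Prop :=
  forall p, (exists k, forall m : 'X_{1..n}, mdeg m = k -> I ('X_[m] * p)) -> I p.

Definition hilbert_fn (I : P -> Prop) (t k : nat) : Prop :=
  dim_mod (homog_piece t) I k.

(* P V(I) is zero-dimensional of length (degree) D: the Hilbert polynomial of
   T/I is the constant D, i.e. the Hilbert function is eventually equal to D *)
Definition zero_dim_of_degree (I : P -> Prop) (D : nat) : Prop :=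
  exists t0, forall t, (t0 <= t)%N -> hilbert_fn I t D.

End Apolarity.

From HB Require Import structures.
From mathcomp Require Import all_boot all_order all_algebra.
From mathcomp Require Import mpoly zify.
From mathcomp.multinomials Require Import ssrcomplements.
Import GRing.Theory.
Local Open Scope ring_scope.
Set Implicit Arguments. Unset Strict Implicit. Unset Printing Implicit Defensive.

(* The map [G |-> alpha o G] maps Diff(F) into Diff(alpha o F),
   so by rank-nullity it suffices to bound the dimension of its kernel V by
   deg I.  Since alpha is linear, V is graded.  In characteristic 0 the
   pairing <Theta, G> = constant term of Theta o G is perfect on each degree
   (<x^a, G> = a! G_a), so one can pick forms of degree e dual to a basis of
   V_e.  Inductively, alpha times the family already built in degree e - 1,
   together with these duals, is linearly independent modulo I in degree e:
   pairing with V_e kills I (as I is apolar to F) and kills alpha T (as alpha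
   kills V), which forces the dual coefficients to vanish, and then
   I : alpha = I lets us cancel alpha.  In degree d this yields dim V forms
   independent modulo I; multiplying them by a power of alpha moves them to a
   degree where the Hilbert function of T/I equals deg I. *)

Section ApolarAction.
Variables (K : fieldType) (n : nat).
Local Notation P := {mpoly K[n]}.

Lemma apolar_bmE k (T G : P) : (msize T <= k)%N ->
  apolar T G = \sum_(m : 'X_{1..n < k}) T@_m *: mderivm m G.
Proof.
move=> le_Tk; pose Q (m : 'X_{1..n < k}) := val m \in msupp T.
rewrite (bigID Q) /= addrC big1 ?add0r; last first.
  by move=> m /memN_msupp_eq0 ->; rewrite scale0r.
rewrite /apolar (big_mksub 'X_{1..n < k}) //=; first exact/msupp_uniq.
by move=> m /msize_mdeg_lt /leq_trans; apply.
Qed.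

Lemma apolarDl (T1 T2 G : P) : apolar (T1 + T2) G = apolar T1 G + apolar T2 G.
Proof.
pose k := maxn (msize (T1 + T2)) (maxn (msize T1) (msize T2)).
rewrite !(@apolar_bmE k) ?leq_max ?leqnn ?orbT // -big_split /=.
by apply: eq_bigr => m _; rewrite mcoeffD scalerDl.
Qed.

Lemma apolarZl a (T G : P) : apolar (a *: T) G = a *: apolar T G.
Proof.
pose k := maxn (msize (a *: T)) (msize T).
rewrite !(@apolar_bmE k) ?leq_max ?leqnn ?orbT // scaler_sumr.
by apply: eq_bigr => m _; rewrite mcoeffZ scalerA.
Qed.

Lemma apolar0l (G : P) : apolar 0 G = 0.
Proof. by rewrite /apolar msupp0 big_nil. Qed.

Lemma apolar_suml I (r : seq I) (Q : pred I) (f : I -> P) G :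
  apolar (\sum_(i <- r | Q i) f i) G = \sum_(i <- r | Q i) apolar (f i) G.
Proof.
apply: (big_morph (fun T => apolar T G)); last exact: apolar0l.
by move=> T1 T2; apply: apolarDl.
Qed.

Lemma apolarX m (G : P) : apolar 'X_[m] G = mderivm m G.
Proof. by rewrite /apolar msuppX big_seq1 mcoeffX eqxx scale1r. Qed.

Fact apolar_is_linear (T : P) : linear (apolar T).
Proof.
move=> a G1 G2; rewrite /apolar scaler_sumr -big_split /=.
by apply: eq_bigr => m _; rewrite mderivmD mderivmZ scalerDr !scalerA mulrC.
Qed.

HB.instance Definition _ (T : P) :=
  GRing.isLinear.Build K P P *:%R (apolar T) (apolar_is_linear T).

Lemma apolarXM m (S G : P) : apolar ('X_[m] * S) G = mderivm m (apolar S G).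
Proof.
rewrite {1}[S]mpolyE mulr_sumr (eq_bigr (fun b => S@_b *: 'X_[m + b])); last first.
  by move=> b _; rewrite -scalerAr mpolyXD.
rewrite apolar_suml {2}/apolar raddf_sum /=; apply: eq_bigr => b _.
by rewrite apolarZl apolarX mderivmZ -mderivmDm addmC.
Qed.

Lemma apolarM (T S G : P) : apolar (T * S) G = apolar T (apolar S G).
Proof.
rewrite {1}[T]mpolyE mulr_suml apolar_suml; apply: eq_bigr => a _.
by rewrite -scalerAl apolarZl apolarXM.
Qed.

Lemma mcoeff_hcomp t (p : P) m :
  (hcomp t p)@_m = if mdeg m == t then p@_m else 0.
Proof.
rewrite /hcomp raddf_sum /= big_mkcond /=.
rewrite (eq_bigr (fun k => if mdeg m == t then p@_k * (k == m)%:R else 0)); last first.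
  move=> k _; rewrite mcoeffZ mcoeffX.
  by case: (eqVneq k m) => [->|_]; rewrite ?mulr0; do 2?case: ifP.
case: ifP => _; last by rewrite big1.
rewrite {3}[p]mpolyE raddf_sum /=; apply: eq_bigr => k _.
by rewrite mcoeffZ mcoeffX.
Qed.

Fact hcomp_is_linear t : linear (hcomp t : P -> P).
Proof.
move=> a p q; apply/mpolyP => m.
by rewrite mcoeffD mcoeffZ !mcoeff_hcomp mcoeffD mcoeffZ; case: ifP; rewrite ?mulr0 ?addr0.
Qed.

HB.instance Definition _ t :=
  GRing.isLinear.Build K P P *:%R (hcomp t) (hcomp_is_linear t).

Lemma hcomp_homog t (p : P) : hcomp t p \is t.-homog.
Proof.
apply/dhomogP => m hm; have : (hcomp t p)@_m != 0 by rewrite mcoeff_eq0 hm.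
by rewrite mcoeff_hcomp; case: (mdeg m =P t) => // _; rewrite eqxx.
Qed.

Lemma mderivm_hcomp m t (p : P) : mderivm m (hcomp t p) =
  if (mdeg m <= t)%N then hcomp (t - mdeg m) (mderivm m p) else 0.
Proof.
apply/mpolyP => k; rewrite mcoeff_mderivm mcoeff_hcomp mdegD.
case: leqP => hm; last first.
  have -> : (mdeg m + mdeg k == t)%N = false by apply/eqP; lia.
  by rewrite mcoeff0 mul0rn.
rewrite mcoeff_hcomp mcoeff_mderivm.
have -> : (mdeg m + mdeg k == t)%N = (mdeg k == t - mdeg m)%N by apply/eqP/eqP; lia.
by case: ifP; rewrite ?mul0rn.
Qed.

Lemma hcomp_mderivm_homog d t m (F : P) : F \is d.-homog ->
  hcomp t (mderivm m F) = (mdeg m + t == d)%N%:R *: mderivm m F.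
Proof.
move=> hF; apply/mpolyP => k; rewrite mcoeff_hcomp mcoeffZ mcoeff_mderivm.
have F0 : (mdeg m + mdeg k != d)%N -> F@_(m + k) = 0.
  by move=> h; apply: (dhomog_nemf_coeff hF); rewrite -mdegD in h.
case: (eqVneq (mdeg k) t) => [<-|ne].
  by case: (eqVneq (mdeg m + mdeg k)%N d) => [_|/F0 ->]; rewrite ?mul1r ?mul0rn ?mulr0.
case: (eqVneq (mdeg m + t)%N d) => [e|_]; last by rewrite mul0r.
by rewrite F0 ?mul0rn ?mulr0 //; apply/eqP; lia.
Qed.

Lemma apolar_hcomp_eq0 (alpha p : P) t : alpha \is 1.-homog ->
  apolar alpha p = 0 -> apolar alpha (hcomp t p) = 0.
Proof.
move=> ha hp; rewrite /apolar; case: (boolP (1 <= t)%N) => ht; last first.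
  rewrite big_seq big1 // => m /(dhomog_mf ha) /= dm.
  by rewrite mderivm_hcomp dm (negbTE ht) scaler0.
transitivity (\sum_(m <- msupp alpha) hcomp (t - 1) (alpha@_m *: mderivm m p)).
  apply: eq_big_seq => m /(dhomog_mf ha) /= dm.
  by rewrite mderivm_hcomp dm ht linearZ.
by rewrite -raddf_sum -/(apolar alpha p) hp raddf0.
Qed.

Definition pairing (T G : P) : K := (apolar T G)@_0%MM.

Definition mfact (m : 'X_{1..n}) : nat := \prod_(i < n) (m i)`!.

Lemma mfact_neq0 m : [pchar K] =i pred0 -> (mfact m)%:R != 0 :> K.
Proof. by move=> /pcharf0P ->; rewrite -lt0n prodn_gt0 // => i; rewrite fact_gt0. Qed.

Lemma pairingX m (G : P) : pairing 'X_[m] G = G@_m * (mfact m)%:R.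
Proof.
rewrite /pairing apolarX mcoeff_mderivm addm0 mulr_natr /mfact.
by congr (_ *+ _); apply: eq_bigr => i _; rewrite ffactnn.
Qed.

Lemma pairingDl (T1 T2 G : P) : pairing (T1 + T2) G = pairing T1 G + pairing T2 G.
Proof. by rewrite /pairing apolarDl mcoeffD. Qed.

Lemma pairing_suml I (r : seq I) (Q : pred I) (a : I -> K) (f : I -> P) G :
  pairing (\sum_(i <- r | Q i) a i *: f i) G = \sum_(i <- r | Q i) a i * pairing (f i) G.
Proof.
rewrite /pairing apolar_suml raddf_sum /=; apply: eq_bigr => i _.
by rewrite apolarZl mcoeffZ.
Qed.

Lemma pairing0r (T : P) : pairing T 0 = 0.
Proof. by rewrite /pairing raddf0 mcoeff0. Qed.

Lemma pairingMl (T S G : P) : pairing (T * S) G = pairing S (apolar T G).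
Proof. by rewrite /pairing mulrC apolarM. Qed.

End ApolarAction.

Section DiffSpace.
Variables (K : fieldType) (n d : nat) (F : {mpoly K[n]}).
Local Notation P := {mpoly K[n]}.

Lemma Diff0 : Diff F 0.
Proof. by exists 0; rewrite apolar0l. Qed.

Lemma DiffD p q : Diff F p -> Diff F q -> Diff F (p + q).
Proof. by move=> [T ->] [S ->]; exists (T + S); rewrite apolarDl. Qed.

Lemma DiffZ a p : Diff F p -> Diff F (a *: p).
Proof. by move=> [T ->]; exists (a *: T); rewrite apolarZl. Qed.

Lemma Diff_sum I (r : seq I) (Q : pred I) (f : I -> P) :
  (forall i, Q i -> Diff F (f i)) -> Diff F (\sum_(i <- r | Q i) f i).
Proof. by move=> h; apply: big_ind => //; [exact: Diff0 | exact: DiffD]. Qed.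

Lemma Diff_apolar T G : Diff F G -> Diff F (apolar T G).
Proof. by move=> [S ->]; exists (T * S); rewrite apolarM. Qed.

Lemma apolar_Diff T G : Diff F G -> Diff (apolar T F) (apolar T G).
Proof. by move=> [S ->]; exists S; rewrite -!apolarM mulrC. Qed.

Hypothesis homF : F \is d.-homog.

Lemma Diff_hcomp t G : Diff F G -> Diff F (hcomp t G).
Proof.
move=> [T ->]; exists (\sum_(m <- msupp T) (T@_m * (mdeg m + t == d)%N%:R) *: 'X_[m]).
rewrite apolar_suml {1}/apolar raddf_sum; apply: eq_bigr => m _.
by rewrite /= linearZ /= (hcomp_mderivm_homog _ _ homF) apolarZl apolarX scalerA.
Qed.

Lemma Diff_msize G : Diff F G -> (msize G <= d.+1)%N.
Proof.
move=> [T ->]; rewrite msizeE; apply/bigmax_leqP_seq => m + _.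
rewrite mcoeff_msupp ltnS; apply: contraTT; rewrite -ltnNge negbK => ltdm.
rewrite /apolar raddf_sum /= big1 // => a _.
rewrite mcoeffZ mcoeff_mderivm (dhomog_nemf_coeff homF) ?mul0rn ?mulr0 //.
by apply/eqP => h; move: (mdegD a m) => /=; rewrite h; lia.
Qed.

End DiffSpace.

Section Coordinates.
Variables (K : fieldType) (n B : nat).
Local Notation P := {mpoly K[n]}.

Definition nbmon : nat := #|{: 'X_{1..n < B}}|.

Definition bmon (k : 'I_nbmon) : 'X_{1..n} := val (enum_val k : 'X_{1..n < B}).

Lemma bmon_inj : injective bmon.
Proof. by move=> i j /val_inj /enum_val_inj. Qed.

Lemma mdeg_bmon k : (mdeg (bmon k) < B)%N.
Proof. exact: bmdeg. Qed.

Lemma bmonP m : (mdeg m < B)%N -> exists k, bmon k = m.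
Proof. by move=> h; exists (enum_rank (BMultinom h)); rewrite /bmon enum_rankK. Qed.

Definition coefrow (p : P) : 'rV[K]_nbmon := \row_k p@_(bmon k).

Definition rowpoly (v : 'rV[K]_nbmon) : P := \sum_k v 0 k *: 'X_[bmon k].

Fact coefrow_is_linear : linear coefrow.
Proof. by move=> a p q; apply/rowP => k; rewrite !mxE mcoeffD mcoeffZ. Qed.

HB.instance Definition _ :=
  GRing.isLinear.Build K P 'rV[K]_nbmon *:%R coefrow coefrow_is_linear.

Fact rowpoly_is_linear : linear rowpoly.
Proof.
move=> a u v; rewrite /rowpoly scaler_sumr -big_split /=.
by apply: eq_bigr => k _; rewrite !mxE scalerDl scalerA.
Qed.

HB.instance Definition _ :=
  GRing.isLinear.Build K 'rV[K]_nbmon P *:%R rowpoly rowpoly_is_linear.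

Lemma mcoeff_rowpoly v m : (rowpoly v)@_m = \sum_k v 0 k * (bmon k == m)%:R.
Proof. by rewrite /rowpoly raddf_sum /=; apply: eq_bigr => k _; rewrite mcoeffZ mcoeffX. Qed.

Lemma mcoeff_rowpoly_bmon v k : (rowpoly v)@_(bmon k) = v 0 k.
Proof.
rewrite mcoeff_rowpoly (bigD1 k) //= eqxx mulr1 big1 ?addr0 // => j ne.
by rewrite (inj_eq bmon_inj) (negbTE ne) mulr0.
Qed.

Lemma rowpolyK : cancel rowpoly coefrow.
Proof. by move=> v; apply/rowP => k; rewrite mxE mcoeff_rowpoly_bmon. Qed.

Lemma coefrowK p : (msize p <= B)%N -> rowpoly (coefrow p) = p.
Proof.
move=> hp; apply/mpolyP => m; case: (ltnP (mdeg m) B) => hm.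
  by have [k <-] := bmonP hm; rewrite mcoeff_rowpoly_bmon mxE.
rewrite (memN_msupp_eq0 (msize_mdeg_ge (leq_trans hp hm))).
rewrite mcoeff_rowpoly big1 // => k _.
have /negbTE -> : bmon k != m by apply/eqP => e; move: (mdeg_bmon k); rewrite e; lia.
by rewrite mulr0.
Qed.

Lemma rowpoly_mul r (y : 'rV_r) (M : 'M_(r, nbmon)) :
  rowpoly (y *m M) = \sum_i y 0 i *: rowpoly (row i M).
Proof. by rewrite mulmx_sum_row linear_sum; apply: eq_bigr => i _; rewrite linearZ. Qed.

Definition degproj (e : nat) : 'M[K]_nbmon :=
  \matrix_(i, j) ((i == j) && (mdeg (bmon j) == e))%:R.

Lemma mul_degproj (x : 'rV_nbmon) e :
  x *m degproj e = \row_j (if mdeg (bmon j) == e then x 0 j else 0).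
Proof.
apply/rowP => j; rewrite !mxE (bigD1 j) //= big1 ?addr0; last first.
  by move=> i ne; rewrite mxE (negbTE ne) mulr0.
by rewrite mxE eqxx /=; case: ifP; rewrite ?mulr1 ?mulr0.
Qed.

Lemma sum_degproj : \sum_(e < B) degproj e = 1%:M.
Proof.
apply/matrixP => i j; rewrite summxE !mxE.
case: (eqVneq i j) => [->|ne] /=; last by rewrite big1 // => e _; rewrite mxE (negbTE ne).
rewrite (bigD1 (Ordinal (mdeg_bmon j))) //= mxE !eqxx /= big1 ?addr0 // => e ne.
by rewrite mxE eqxx /=; case: eqP => // h; case/eqP: ne; apply: val_inj.
Qed.

Lemma rowpoly_degproj x e : rowpoly (x *m degproj e) = hcomp e (rowpoly x).
Proof.
apply/mpolyP => m; rewrite mcoeff_hcomp !mcoeff_rowpoly.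
case: eqP => [<-|ne]; last first.
  rewrite big1 // => k _; rewrite mul_degproj mxE.
  case: (bmon k =P m) => [ekm|_]; last by rewrite mulr0.
  by rewrite -ekm in ne; rewrite (introF eqP ne) mul0r.
apply: eq_bigr => k _; rewrite mul_degproj mxE.
by case: (eqVneq (bmon k) m) => [->|_]; rewrite ?eqxx ?mulr0.
Qed.

Definition apolarmx (T : P) : 'M[K]_nbmon :=
  \matrix_(j, k) (apolar T 'X_[bmon j])@_(bmon k).

Lemma coefrow_apolar T p : (msize p <= B)%N ->
  coefrow p *m apolarmx T = coefrow (apolar T p).
Proof.
move=> hp; apply/rowP => k; rewrite -{2}(coefrowK hp) /rowpoly.
rewrite [apolar T _]linear_sum !mxE raddf_sum /=.
by apply: eq_bigr => j _; rewrite linearZ mcoeffZ !mxE.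
Qed.

Definition coefmx (s : seq P) : 'M[K]_(size s, nbmon) := \matrix_(i, k) (s`_i)@_(bmon k).

Lemma row_coefmx s i : row i (coefmx s) = coefrow s`_i.
Proof. by apply/rowP => k; rewrite !mxE. Qed.

End Coordinates.

Lemma mxrank_sum_le (K : fieldType) m p I (r : seq I) (P : pred I) (A : I -> 'M[K]_(m, p)) :
  (\rank (\sum_(i <- r | P i) A i)%R <= \sum_(i <- r | P i) \rank (A i))%N.
Proof.
apply: (big_rec2 (fun (M : 'M_(m, p)) k => \rank M <= k)%N) => [|i M k _ IH].
  by rewrite mxrank0.
exact: leq_trans (mxrank_add _ _) (leq_add (leqnn _) IH).
Qed.

Lemma dual_family (K : fieldType) n B e r (G : 'M[K]_(r, nbmon n B)) :
  [pchar K] =i pred0 -> row_free G ->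
  (forall i k, mdeg (bmon k) != e -> G i k = 0) ->
  exists Phi : 'I_r -> {mpoly K[n]}, (forall j, Phi j \is e.-homog) /\
    forall i j, pairing (Phi j) (rowpoly (row i G)) = (i == j)%:R.
Proof.
move=> charK0 /row_freeP [X GX] Ge.
exists (fun j => rowpoly ((\row_k (X k j / (mfact (bmon k))%:R)) *m degproj K n B e)).
split=> [j|i j]; first by rewrite rowpoly_degproj hcomp_homog.
rewrite {1}/rowpoly pairing_suml.
transitivity ((G *m X) i j); last by rewrite GX mxE.
rewrite mxE; apply: eq_bigr => k _; rewrite pairingX mcoeff_rowpoly_bmon mul_degproj !mxE.
case: (eqVneq (mdeg (bmon k)) e) => [_|ne]; last by rewrite Ge // !mul0r.
by rewrite [_ * (mfact _)%:R]mulrC mulrA divfK ?mfact_neq0 // mulrC.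
Qed.

Section LinearCombinations.
Variables (K : fieldType) (n : nat).
Local Notation P := {mpoly K[n]}.

(* [free_mod] with coefficients indexed by [nat]: this avoids casts between
   ['I_(size (s1 ++ s2))] and ['I_(size s1 + size s2)]. *)
Definition lincomb (a : nat -> K) (s : seq P) : P := \sum_(i < size s) a i *: s`_i.

Definition free_modn (W : P -> Prop) (s : seq P) : Prop :=
  forall a, W (lincomb a s) -> forall i, (i < size s)%N -> a i = 0.

Lemma lincomb_cat a s1 s2 :
  lincomb a (s1 ++ s2) = lincomb a s1 + lincomb (fun i => a (size s1 + i)%N) s2.
Proof.
rewrite /lincomb size_cat big_split_ord /=; congr (_ + _); apply: eq_bigr => i _.
  by rewrite nth_cat ltn_ord.
by rewrite nth_cat /= ltnNge leq_addr /= addKn.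
Qed.

Lemma lincomb_mapMl a s (q : P) : lincomb a (map (fun p => q * p) s) = q * lincomb a s.
Proof.
rewrite /lincomb size_map mulr_sumr; apply: eq_bigr => i _.
by rewrite (nth_map 0) // scalerAr.
Qed.

Lemma lincomb_map_ord a r (f : 'I_r -> P) :
  lincomb a (map f (enum 'I_r)) = \sum_(j < r) a j *: f j.
Proof.
rewrite /lincomb size_map size_enum_ord; apply: eq_bigr => j _.
by rewrite (nth_map j) ?size_enum_ord // nth_ord_enum.
Qed.

Lemma free_modnW W s : free_modn W s -> free_mod W s.
Proof.
move=> free_s a Wa i; pose a' k := oapp a 0 (insub k : option 'I_(size s)).
have e : lincomb a' s = \sum_(i < size s) a i *: s`_i.
  by apply: eq_bigr => j _; rewrite /a' valK.
by have := free_s a'; rewrite e => /(_ Wa i (ltn_ord i)); rewrite /a' valK.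
Qed.

Lemma free_modn_rows B r (M : 'M[K]_(r, nbmon n B)) (f : 'I_r -> P) : row_free M ->
  (forall i, coefrow B (f i) = row i M) -> free_modn (@zero_sp K n) (map f (enum 'I_r)).
Proof.
move=> freeM fM a; rewrite lincomb_map_ord /zero_sp size_map size_enum_ord => a0 i lt_ir.
have : (\row_(j < r) a j) *m M = coefrow B (\sum_(j < r) a j *: f j).
  by rewrite mulmx_sum_row linear_sum; apply: eq_bigr => j _; rewrite linearZ /= fM mxE.
rewrite a0 linear0 => /eqP; rewrite mulmx_free_eq0 // => /eqP /rowP /(_ (Ordinal lt_ir)).
by rewrite !mxE.
Qed.

End LinearCombinations.

Section ApolarLengthBound.
Variables (K : fieldType) (n d : nat) (F alpha : {mpoly K[n]}) (I : {mpoly K[n]} -> Prop).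
Local Notation P := {mpoly K[n]}.
Local Notation B := d.+1.
Local Notation coefrow := (@coefrow K n B).
Local Notation coefmx := (@coefmx K n B).
Local Notation rowpoly := (@rowpoly K n B).
Local Notation degproj := (@degproj K n B).
Local Notation apolarmx := (@apolarmx K n B).

Hypothesis charK0 : [pchar K] =i pred0.
Hypothesis homF : F \is d.-homog.
Hypothesis homa : alpha \is 1.-homog.
Hypothesis idealI : is_ideal I.
Hypothesis I_perp : forall T, I T -> perp F T.
Hypothesis I_colon : forall p, I (alpha * p) -> I p.

Lemma apolar_ideal_Diff T G : I T -> Diff F G -> apolar T G = 0.
Proof.
move=> IT [S ->]; rewrite -apolarM; apply: I_perp.
by case: idealI => _ _ IM; rewrite mulrC; apply: IM.
Qed.

Lemma I_colon_expr k p : I (alpha ^+ k * p) -> I p.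
Proof.
elim: k p => [|k IH] p; first by rewrite expr0 mul1r.
by rewrite exprS -mulrA => /I_colon /IH.
Qed.

(* Pairing against [G i] kills [I] (as [G i] lies in [Diff F]) and kills
   [alpha * T] (as [alpha] kills [G i]), so it reads off the coefficient of
   [Phi i]; what remains is [alpha * lincomb a fam], and [I : alpha = I]. *)
Lemma free_modn_extend fam r (Phi G : 'I_r -> P) :
  free_modn I fam -> (forall i, Diff F (G i)) -> (forall i, apolar alpha (G i) = 0) ->
  (forall i j, pairing (Phi j) (G i) = (i == j)%:R) ->
  free_modn I (map (fun p => alpha * p) fam ++ map Phi (enum 'I_r)).
Proof.
move=> free_fam DiffG alphaG dualPhi a.
rewrite lincomb_cat lincomb_mapMl lincomb_map_ord size_map => Ia.
have a_Phi (j : 'I_r) : a (size fam + j)%N = 0.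
  have : pairing (alpha * lincomb a fam + \sum_(j0 < r) a (size fam + j0)%N *: Phi j0)
                 (G j) = 0.
    by rewrite /pairing (apolar_ideal_Diff Ia (DiffG j)) mcoeff0.
  rewrite pairingDl pairingMl alphaG pairing0r add0r pairing_suml.
  rewrite (bigD1 j) //= dualPhi eqxx mulr1 big1 ?addr0 // => k ne.
  by rewrite dualPhi eq_sym (negbTE ne) mulr0.
rewrite big1 ?addr0 in Ia; last by move=> j _; rewrite a_Phi scale0r.
move=> i; rewrite size_cat !size_map -enumT size_enum_ord => lt_i.
case: (ltnP i (size fam)) => [|le_fam_i]; first exact: free_fam (I_colon Ia) i.
have lt_ir : (i - size fam < r)%N by rewrite ltn_subLR.
by have := a_Phi (Ordinal lt_ir); rewrite /= subnKC.
Qed.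

Section GradedKernel.
Variables (m : nat) (V : 'M[K]_(m, nbmon n B)).
Hypothesis V_kernel : forall x, (x <= V)%MS ->
  Diff F (rowpoly x) /\ apolar alpha (rowpoly x) = 0.

Lemma degproj_kernel E x : (x <= V *m degproj E)%MS ->
  [/\ Diff F (rowpoly x), apolar alpha (rowpoly x) = 0 &
      forall k, mdeg (bmon k) != E -> x 0 k = 0].
Proof.
case/submxP => y ->; rewrite mulmxA.
have [DiffV alphaV] := V_kernel (submxMl y V).
rewrite rowpoly_degproj; split; first exact: Diff_hcomp homF _ _ DiffV.
  exact: apolar_hcomp_eq0 homa alphaV.
by move=> k hk; rewrite mul_degproj mxE (negbTE hk).
Qed.

Lemma kernel_family_step E fam :
  {in fam, forall p, alpha * p \is E.-homog} -> free_modn I fam ->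
  exists fam' : seq P, [/\ size fam' = (size fam + \rank (V *m degproj E))%N,
    {in fam', forall p, p \is E.-homog} & free_modn I fam'].
Proof.
move=> hom_fam free_fam; set G := row_base (V *m degproj E).
have G_sub : (G <= V *m degproj E)%MS by rewrite eq_row_base.
have G_kernel i := degproj_kernel (submx_trans (row_sub i G) G_sub).
have G_deg i k : mdeg (bmon k) != E -> G i k = 0.
  by have [_ _ /(_ k)] := G_kernel i; rewrite mxE.
have [Phi [hom_Phi dual_Phi]] := dual_family charK0 (row_base_free _) G_deg.
exists (map (fun p => alpha * p) fam ++ map Phi (enum 'I_(\rank (V *m degproj E)))).
split; first by rewrite size_cat !size_map -enumT size_enum_ord.
  by move=> p; rewrite mem_cat => /orP[/mapP[q /hom_fam ? ->] | /mapP[j _ ->]].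
by apply: free_modn_extend dual_Phi => // i; have [] := G_kernel i.
Qed.

Lemma kernel_family E : exists fam : seq P,
  [/\ size fam = (\sum_(e < E.+1) \rank (V *m degproj e))%N,
      {in fam, forall p, p \is E.-homog} & free_modn I fam].
Proof.
elim: E => [|E [fam [size_fam hom_fam free_fam]]].
  have hom_nil : {in [::], forall p : P, alpha * p \is 0.-homog} by [].
  have free_nil : free_modn I [::] by move=> ? ? ?.
  have [fam [size_fam hom_fam free_fam]] := kernel_family_step hom_nil free_nil.
  by exists fam; rewrite big_ord1.
have hom_afam : {in fam, forall p, alpha * p \is E.+1.-homog}.
  by move=> p /hom_fam; apply: dhomogM homa.
have [fam' [size_fam' hom_fam' free_fam']] := kernel_family_step hom_afam free_fam.
by exists fam'; rewrite big_ord_recr /= -size_fam.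
Qed.

End GradedKernel.

Section DiffBasis.
Variable s : seq P.
Hypothesis s_Diff : {in s, forall G, Diff F G}.

Lemma msize_nth_Diff i : (msize s`_i <= B)%N.
Proof.
case: (ltnP i (size s)) => [lt_is | le_si]; last by rewrite nth_default ?msize0.
exact/(Diff_msize homF)/s_Diff/mem_nth.
Qed.

Lemma rowpoly_mul_coefmx (y : 'rV_(size s)) :
  rowpoly (y *m coefmx s) = \sum_i y 0 i *: s`_i.
Proof.
rewrite rowpoly_mul; apply: eq_bigr => i _.
by rewrite row_coefmx coefrowK ?msize_nth_Diff.
Qed.

Lemma Diff_rowpoly_coefmx (y : 'rV_(size s)) : Diff F (rowpoly (y *m coefmx s)).
Proof.
by rewrite rowpoly_mul_coefmx; apply: Diff_sum => i _; apply/DiffZ/s_Diff/mem_nth.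
Qed.

Lemma coefmx_row_free : free_mod (@zero_sp K n) s -> row_free (coefmx s).
Proof.
move=> free_s; apply/inj_row_free => y /(congr1 rowpoly).
rewrite rowpoly_mul_coefmx linear0 => /(free_s (fun i => y 0 i)) y0.
by apply/rowP => i; rewrite mxE y0.
Qed.

Lemma coefmx_kernel x : (x <= coefmx s :&: kermx (apolarmx alpha))%MS ->
  Diff F (rowpoly x) /\ apolar alpha (rowpoly x) = 0.
Proof.
move=> x_ker; have /sub_kermxP x_alpha := submx_trans x_ker (capmxSr _ _).
have /submxP [y x_y] := submx_trans x_ker (capmxSl _ _).
have Diff_x : Diff F (rowpoly x) by rewrite x_y; apply: Diff_rowpoly_coefmx.
have Diff_ax : Diff F (apolar alpha (rowpoly x)) by apply: Diff_apolar.
split=> //; rewrite -(coefrowK (Diff_msize homF Diff_ax)).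
by rewrite -coefrow_apolar ?(Diff_msize homF) // rowpolyK x_alpha linear0.
Qed.

Lemma rank_apolar_image_le alaF : apolar_length (apolar alpha F) alaF ->
  (\rank (coefmx s *m apolarmx alpha) <= alaF)%N.
Proof.
move=> [_ maxDa]; set A := coefmx s *m apolarmx alpha.
pose f j := apolar alpha s`_(maxrankfun A j).
have free_f : free_modn (@zero_sp K n) (map f (enum 'I_(\rank A))).
  apply: (free_modn_rows (maxrowsub_free A)) => j.
  by rewrite row_rowsub row_mul row_coefmx coefrow_apolar ?msize_nth_Diff.
rewrite -(size_enum_ord (\rank A)) -(size_map f).
apply: maxDa (free_modnW free_f) => _ /mapP [j _ ->].
exact/apolar_Diff/s_Diff/mem_nth.
Qed.

Lemma rank_apolar_kernel_le degI : zero_dim_of_degree I degI ->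
  (\rank (coefmx s :&: kermx (apolarmx alpha)) <= degI)%N.
Proof.
move=> [t0 HF_I]; set V := (coefmx s :&: kermx (apolarmx alpha))%MS.
pose N := maxn t0 d; have [_ maxI] := HF_I N (leq_maxl _ _).
have [fam [size_fam hom_fam free_fam]] := kernel_family coefmx_kernel d.
have : (size (map (fun p => alpha ^+ (N - d) * p)%R fam) <= degI)%N.
  apply: maxI => [_ /mapP [p /hom_fam hom_p ->] | ].
    by have := dhomogM (dhomogMn (N - d) homa) hom_p; rewrite mul1n subnK ?leq_maxr.
  apply: free_modnW => a; rewrite lincomb_mapMl size_map => /I_colon_expr.
  exact: free_fam.
rewrite size_map size_fam; apply: leq_trans.
by rewrite -{1}(mulmx1 V) -sum_degproj mulmx_sumr mxrank_sum_le.
Qed.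

End DiffBasis.

Lemma apolar_length_le alF alaF degI : zero_dim_of_degree I degI ->
  apolar_length F alF -> apolar_length (apolar alpha F) alaF -> (alF <= degI + alaF)%N.
Proof.
move=> zdI [[s [<- [s_Diff free_s]]] _] alaF_max.
have := mxrank_mul_ker (coefmx s) (apolarmx alpha).
rewrite (eqnP (coefmx_row_free s_Diff free_s)) => <-.
by rewrite addnC leq_add ?rank_apolar_image_le ?rank_apolar_kernel_le.
Qed.

End ApolarLengthBound.

Theorem mainTheorem3 (K : closedFieldType) (charK0 : [pchar K] =i pred0)
  (n d : nat) (F : {mpoly K[n]}) (alpha : {mpoly K[n]})
  (I : {mpoly K[n]} -> Prop) (degI alF alaF : nat) :
  F \is d.-homog ->
  alpha \is 1.-homog ->
  is_homogeneous_ideal I ->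
  is_saturated I ->
  (forall Theta, I Theta -> perp F Theta) ->
  zero_dim_of_degree I degI ->
  (forall p, I (alpha * p) -> I p) ->
  apolar_length F alF ->
  apolar_length (apolar alpha F) alaF ->
  (alF <= degI + alaF)%N.
Proof.
move=> homF homa [idealI _] _ I_perp zdI I_colon lenF lenaF.
exact (apolar_length_le charK0 homF homa idealI I_perp I_colon zdI lenF lenaF).
Qed.
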